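(* Let $T$ be a tree of order $n\geq 3$ and let $\mathcal{G}$ be an arbitrary Abelian group of order at least $4$. Then there exists a labeling $f\colon E(T)\to\mathcal{G}\setminus\{0\}$ such that $w_f(u)\neq w_f(v)$ for every edge $uv$ of $T$.
   Context: $w_f(v)=\sum_{u\in N(v)}f(uv)$, the sum taken in $\mathcal{G}$; $0$ is the identity of $\mathcal{G}$. *)

From HB Require Import structures.
From mathcomp Require Import all_boot all_order all_algebra.
Set Implicit Arguments. Unset Strict Implicit. Unset Printing Implicit Defensive.
Import GRing.Theory.
Local Open Scope ring_scope.

Definition simple_graph (V : finType) (e : rel V) : Prop :=
  symmetric e /\ irreflexive e.

(* A tree: a connected simple graph with no cycle (a cycle being a
   closed walk through at least 3 pairwise distinct vertices). *)
Definition is_tree (V : finType) (e : rel V) : Prop :=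
  [/\ simple_graph e,
      (forall x y : V, connect e x y)
    & (forall p : seq V, ucycle e p -> (size p <= 2)%N)].

(* An edge labeling f : E(T) -> G \ {0}, represented as a symmetric function
   on pairs of vertices whose values on edges are nonzero (values on
   non-edges are irrelevant). *)
Definition nonzero_edge_labeling (V : finType) (e : rel V) (G : zmodType)
  (f : V -> V -> G) : Prop :=
  (forall u v, f u v = f v u) /\ (forall u v, e u v -> f u v != 0).

Definition weight (V : finType) (e : rel V) (G : zmodType)
  (f : V -> V -> G) (v : V) : G :=
  \sum_(u | e v u) f v u.

From HB Require Import structures.
From mathcomp Require Import all_boot all_order all_algebra zify.

Set Implicit Arguments.
Unset Strict Implicit.
Unset Printing Implicit Defensive.

Import GRing.Theory.

(* Root the tree at a vertex r of degree at least 2 and choose the labels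
   top-down.  When a vertex v is reached, the edge to its parent carries a
   label a <> 0 (a = 0 at the root) and the weight b <> a of the parent is
   already fixed.  The k labels on the edges to the children of v are chosen
   so that w(v) = a + (their sum) differs from b and every child label c
   satisfies c <> 0 and c <> w(v), which is the same condition again one level
   down.  Pairs u, -u with u outside {0, w(v), -w(v)} leave the sum unchanged;
   for odd k one first adds a label w outside {0, b - a} (then w <> a + w since
   a <> 0), and at the root, where k >= 3 is odd, three labels whose pairwise
   sums are nonzero.  Each choice avoids at most three values of G, which is
   where |G| >= 4 is used. *)

Section Star.
Local Open Scope ring_scope.
Variables (G : zmodType) (four : seq G).
Hypotheses (four_uniq : uniq four) (four_size : size four = 4%N).

Definition fresh (L : seq G) : G := nth 0 four (find [predC L] four).

Lemma fresh_notin L : (size L <= 3)%N -> fresh L \notin L.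
Proof.
move=> sizeL; apply: (nth_find 0 (a := [predC L])); rewrite has_predC.
apply: contraTN sizeL => /allP four_sub; rewrite -ltnNge -four_size.
exact: uniq_leq_size.
Qed.

Lemma addr_eql0 (x y : G) : (x + y == x) = (y == 0).
Proof. by rewrite -(subr_eq0 (x + y)) addrAC subrr add0r. Qed.

Definition fresh_triple : seq G :=
  let w1 := fresh [:: 0] in let w2 := fresh [:: 0; - w1] in
  [:: w1; w2; fresh [:: 0; - w1; - w2]].

Lemma fresh_triple_spec :
  {in fresh_triple, forall x, (x != 0) && (x != \sum_(y <- fresh_triple) y)}.
Proof.
rewrite /fresh_triple; set w1 := fresh _; set w2 := fresh _; set w3 := fresh _.
have := @fresh_notin [:: 0] isT; have := @fresh_notin [:: 0; - w1] isT.
have := @fresh_notin [:: 0; - w1; - w2] isT; rewrite -/w1 -/w2 -/w3.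
rewrite !inE !negb_or -!addr_eq0 => /and3P[w3_0 w13 w23] /andP[w2_0 w12] w1_0.
rewrite !big_cons big_nil addr0 => x; rewrite !inE => /or3P[] /eqP->.
- by rewrite w1_0 eq_sym addr_eql0 addrC.
- by rewrite w2_0 eq_sym addrCA addr_eql0 addrC.
- by rewrite w3_0 eq_sym addrA (addrC _ w3) addr_eql0 addrC.
Qed.

(* The parameters describe a vertex with [k] children whose parent edge carries
   [a] and whose parent has weight [b]; [root] marks the root, which has
   neither. *)
Definition star_start (root : bool) (a b : G) (k : nat) : seq G :=
  if ~~ odd k then [::] else if root then fresh_triple else [:: fresh [:: 0; b - a]].

Definition star_weight (root : bool) (a b : G) (k : nat) : G :=
  a + \sum_(x <- star_start root a b k) x.

Definition star_labels (root : bool) (a b : G) (k : nat) : seq G :=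
  let l := star_start root a b k in let s := star_weight root a b k in
  let u := fresh [:: 0; s; - s] in let m := (k - size l)./2 in
  l ++ nseq m u ++ nseq m (- u).

Definition star_admissible (root : bool) (a b : G) (k : nat) : bool :=
  if root then (1 < k)%N && (a == 0) else (a != 0) && (b != a).

Lemma star_start_spec root a b k : star_admissible root a b k ->
  let l := star_start root a b k in let s := star_weight root a b k in
  [/\ (size l <= k)%N, ~~ odd (k - size l),
      {in l, forall x, (x != 0) && (x != s)} & ~~ root -> s != b].
Proof.
rewrite /star_weight /star_start /star_admissible.
case: (boolP (odd k)) => [k_odd|k_even] /=; last first.
  move=> adm; rewrite big_nil addr0 subn0; split=> // nonroot.
  by case: root adm nonroot => // /andP[_]; rewrite eq_sym.
case: root => /andP[]; last move=> a_0 b_a /=.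
  move=> k_gt1 /eqP-> /=; have k_ge3 : (3 <= k)%N by case: k k_gt1 k_odd => [|[|[]]].
  by rewrite add0r oddB ?k_odd //; split=> //; apply: fresh_triple_spec.
have := @fresh_notin [:: 0; b - a] isT; set w := fresh _.
rewrite !inE negb_or big_seq1 => /andP[w_0 w_ba].
rewrite oddB ?k_odd ?odd_gt0 //=; split=> //.
- by move=> x; rewrite inE => /eqP->; rewrite w_0 eq_sym addrC addr_eql0.
- by move=> _; apply: contraNneq w_ba => <-; rewrite addrC addKr.
Qed.

Lemma star_labels_spec root a b k : star_admissible root a b k ->
  let L := star_labels root a b k in let s := star_weight root a b k in
  [/\ size L = k, a + \sum_(x <- L) x = s,
      {in L, forall x, (x != 0) && (x != s)} & ~~ root -> s != b].
Proof.
move=> /star_start_spec; rewrite /star_labels.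
set l := star_start _ _ _ _; set s := star_weight _ _ _ _.
move=> [size_l even_rest l_spec s_b]; split=> //.
- rewrite !size_cat !size_nseq addnn -[RHS](subnKC size_l); congr (_ + _)%N.
  by rewrite -[RHS]odd_double_half (negbTE even_rest).
- by rewrite !big_cat !big_nseq /= !iter_addr_0 mulNrn subrr addr0.
have := @fresh_notin [:: 0; s; - s] isT; set u := fresh _.
rewrite !inE !negb_or => /and3P[u_0 u_s u_Ns] x.
rewrite !mem_cat !mem_nseq => /orP[/l_spec // | /orP[] /andP[_ /eqP->]].
  by rewrite u_0.
by rewrite oppr_eq0 u_0 eqr_oppLR.
Qed.

End Star.

Lemma sum_nth_index (T : eqType) (M : nmodType) (s : seq T) (L : seq M) :
  uniq s -> size L = size s ->
  (\sum_(c <- s) nth 0 L (index c s) = \sum_(y <- L) y)%R.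
Proof.
case: s => [|c0 s] s_uniq size_L; first by rewrite (size0nil size_L) !big_nil.
rewrite (big_nth c0) [RHS](big_nth 0%R) size_L !big_mkord.
by apply: eq_bigr => i _; rewrite index_uniq.
Qed.

Section RootedTree.
Variables (V : finType) (e : rel V) (r : V).
Hypotheses (e_sym : symmetric e) (e_conn : forall x y : V, connect e x y).

Fixpoint ball n : {set V} :=
  if n is m.+1 then ball m :|: [set y | [exists x in ball m, e x y]] else [set r].

Lemma mem_ball_last n x p :
  x \in ball n -> path e x p -> last x p \in ball (n + size p).
Proof.
elim: p x n => [|y p IHp] x n /=; first by rewrite addn0.
move=> x_n /andP[e_xy y_p]; rewrite addnS -addSn; apply: IHp y_p.
by rewrite /= in_setU inE; apply/orP; right; apply/existsP; exists x; rewrite x_n.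
Qed.

Lemma exists_ball x : exists n, x \in ball n.
Proof.
have /connectP[p r_p ->] := e_conn r x.
by exists (0 + size p)%N; apply: mem_ball_last; rewrite ?inE.
Qed.

Definition depth x := ex_minn (exists_ball x).

Lemma depth_ball x : x \in ball (depth x).
Proof. by rewrite /depth; case: ex_minnP. Qed.

Lemma depth_min x n : x \in ball n -> depth x <= n.
Proof. by rewrite /depth; case: ex_minnP => m _; apply. Qed.

Lemma depth_eq0 x : (depth x == 0) = (x == r).
Proof.
apply/eqP/eqP => [depth_x | ->]; first by have := depth_ball x; rewrite depth_x inE => /eqP.
by apply/eqP; rewrite -leqn0 depth_min ?inE.
Qed.

Lemma depth_root : depth r = 0.
Proof. by apply/eqP; rewrite depth_eq0. Qed.

Lemma depth_edge x y : e x y -> depth y <= (depth x).+1.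
Proof.
move=> e_xy; apply: depth_min; rewrite /= in_setU inE; apply/orP; right.
by apply/existsP; exists x; rewrite depth_ball.
Qed.

Lemma exists_parent x :
  x != r -> exists y, e x y && ((depth y).+1 == depth x).
Proof.
rewrite -depth_eq0; have := depth_ball x; case def_x: (depth x) => [|m] //= x_m _.
move: x_m; rewrite in_setU inE => /orP[/depth_min | /existsP[y /andP[y_m e_yx]]].
  by rewrite def_x ltnn.
exists y; rewrite e_sym e_yx eqn_leq ltnS depth_min //=.
by move: (depth_edge e_yx); rewrite def_x.
Qed.

Definition parent x : V :=
  if [pick y | e x y && ((depth y).+1 == depth x)] is Some y then y else r.

Lemma parentP x : x != r -> e x (parent x) /\ (depth (parent x)).+1 = depth x.
Proof.
move=> x_r; rewrite /parent; case: pickP => [y /andP[e_xy /eqP] // | no_y].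
by have [y] := exists_parent x_r; rewrite no_y.
Qed.

Lemma exists_branch_vertex :
  3 <= #|V| -> exists v u1 u2, [/\ u1 != u2, e v u1 & e v u2].
Proof.
move=> V_ge3; have [/existsP[z z_deep] | /existsPn shallow] := boolP [exists z, 1 < depth z].
  have z_r : z != r by rewrite -depth_eq0; case: (depth z) z_deep.
  have [e_z depth_z] := parentP z_r.
  have pz_r : parent z != r by rewrite -depth_eq0; move: z_deep; rewrite -depth_z; lia.
  have [e_pz depth_pz] := parentP pz_r.
  exists (parent z), z, (parent (parent z)); split=> //; last by rewrite e_sym.
  by apply/eqP=> z_ppz; move: depth_z depth_pz; rewrite -z_ppz; lia.
have parent_root y : y != r -> parent y = r.
  move=> y_r; have [_ depth_y] := parentP y_r; apply/eqP; rewrite -depth_eq0.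
  by have := shallow y; rewrite -depth_y; lia.
have : 1 < #|[set~ r]| by rewrite cardsC1; lia.
move=> /card_gt1P[y1 [y2 [y1_r y2_r y12]]]; rewrite !inE in y1_r y2_r.
exists r, y1, y2; split=> //; rewrite e_sym.
- by rewrite -(parent_root _ y1_r); case: (parentP y1_r).
- by rewrite -(parent_root _ y2_r); case: (parentP y2_r).
Qed.

Hypotheses (e_irr : irreflexive e)
           (e_acyclic : forall p : seq V, ucycle e p -> (size p <= 2)%N).

Lemma neighbour_neq v u : e v u -> u != v.
Proof. by apply: contraTneq => ->; rewrite e_irr. Qed.

Definition del_vertex (v : V) : rel V := [rel x y | [&& x != v, y != v & e x y]].

Lemma path_del_vertex_notin v x q : path (del_vertex v) x q -> v \notin q.
Proof.
elim: q x => [|y q IHq] x //= /andP[/and3P[_ y_v _] /IHq v_q].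
by rewrite inE negb_or eq_sym y_v.
Qed.

Lemma connect_del_vertex_eq v u1 u2 :
  e v u1 -> e v u2 -> connect (del_vertex v) u1 u2 -> u1 = u2.
Proof.
move=> e_vu1 e_vu2 /connectP[p p_path u2_eq]; rewrite u2_eq in e_vu2 *.
case/shortenP: p_path e_vu2 => q q_path q_uniq _ e_vq.
have q_e : path e u1 q by apply: sub_path q_path => x y /and3P[].
have v_q := path_del_vertex_notin q_path.
have := e_acyclic (p := v :: u1 :: q).
rewrite /ucycle /= rcons_path e_vu1 q_e (e_sym _ v) e_vq inE negb_or eq_sym neighbour_neq // v_q.
move: q_uniq => /= /andP[-> ->].
by case: q {q_path e_vq q_e v_q} => [|? ?] /(_ isT).
Qed.

Lemma connect_del_vertex_root v z :
  z != v -> depth z <= depth v -> connect (del_vertex v) z r.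
Proof.
have [n] := ubnP (depth z); elim: n z => // n IHn z depth_z z_v z_low.
have [-> | z_r] := eqVneq z r; first exact: connect0.
have [e_z depth_pz] := parentP z_r.
have pz_v : parent z != v by apply: contraTneq z_low => <-; rewrite -depth_pz ltnn.
apply: connect_trans (connect1 _) (IHn _ _ pz_v _); last lia.
- exact/and3P.
- lia.
Qed.

Lemma lower_neighbour_unique v u1 u2 : e v u1 -> e v u2 ->
  depth u1 <= depth v -> depth u2 <= depth v -> u1 = u2.
Proof.
move=> e_vu1 e_vu2 u1_low u2_low; apply: (connect_del_vertex_eq e_vu1 e_vu2).
apply: connect_trans (connect_del_vertex_root (neighbour_neq e_vu1) u1_low) _.
have del_sym : connect_sym (del_vertex v).
  by apply: sym_connect_sym => x y; rewrite /del_vertex /= e_sym andbCA.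
by rewrite del_sym; apply: connect_del_vertex_root (neighbour_neq e_vu2) u2_low.
Qed.

Lemma edge_parent x y : e x y -> depth y <= depth x -> x != r /\ y = parent x.
Proof.
move=> e_xy y_low; have x_r : x != r.
  apply: contraTneq y_low => x_eq; rewrite x_eq depth_root leqn0 depth_eq0 -x_eq.
  exact: neighbour_neq.
have [e_x depth_px] := parentP x_r.
by split=> //; apply: lower_neighbour_unique e_xy e_x y_low _; rewrite -depth_px.
Qed.

Lemma edge_parent_or_child x y :
  e x y -> (x != r /\ y = parent x) \/ (y != r /\ x = parent y).
Proof.
move=> e_xy; have [y_low | /ltnW x_low] := leqP (depth y) (depth x).
  by left; apply: edge_parent.
by right; apply: edge_parent; rewrite // e_sym.
Qed.

Definition children x := [seq c <- enum V | (c != r) && (parent c == x)].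

Lemma mem_children x c : (c \in children x) = (c != r) && (parent c == x).
Proof. by rewrite mem_filter mem_enum andbT. Qed.

Lemma children_uniq x : uniq (children x).
Proof. by rewrite filter_uniq ?enum_uniq. Qed.

Lemma root_neighbour_child u : e r u -> u \in children r.
Proof.
rewrite e_sym => e_ur.
have [u_r r_eq] : u != r /\ r = parent u by apply: edge_parent; rewrite ?depth_root.
by rewrite mem_children u_r -r_eq eqxx.
Qed.

Lemma sum_neighbours (M : nmodType) x (F : V -> M) :
  (\sum_(u | e x u) F u =
     (if x == r then 0 else F (parent x)) + \sum_(c <- children x) F c)%R.
Proof.
rewrite (bigID (fun u => (x != r) && (u == parent x))) /=; congr (_ + _)%R.
  have [-> | x_r] := eqVneq x r; first by rewrite big_pred0 // => u; rewrite andbF.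
  rewrite (big_pred1 (parent x)) // => u /=.
  by case: eqVneq => [->|]; rewrite ?andbT ?andbF //; case: (parentP x_r).
rewrite big_filter big_enum_cond /=; apply: eq_bigl => u; apply/idP/idP.
  move=> /andP[e_xu not_parent]; have [u_low | x_low] := leqP (depth u) (depth x).
    by have [x_r u_eq] := edge_parent e_xu u_low; rewrite x_r u_eq eqxx in not_parent.
  rewrite e_sym in e_xu; have [u_r <-] := edge_parent e_xu (ltnW x_low).
  by rewrite u_r eqxx.
move=> /andP[u_r /eqP px]; have [e_u depth_u] := parentP u_r.
rewrite -px e_sym e_u /=; apply: contraTN isT => /andP[pu_r /eqP u_eq].
have [_ depth_pu] := parentP pu_r; move: depth_u depth_pu; rewrite -u_eq; lia.
Qed.

Section Labeling.
Local Open Scope ring_scope.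
Variables (G : zmodType) (four : seq G).
Hypotheses (four_uniq : uniq four) (four_size : size four = 4%N).

Definition child_labels (q : V) (a b : G) : seq G :=
  star_labels four (q == r) a b (size (children q)).

Definition child_weight (q : V) (a b : G) : G :=
  star_weight four (q == r) a b (size (children q)).

Fixpoint parent_edge_data n v : G * G :=
  if n is m.+1 then
    let q := parent v in let ab := parent_edge_data m q in
    (nth 0 (child_labels q ab.1 ab.2) (index v (children q)), child_weight q ab.1 ab.2)
  else (0, 0).

Definition up_label v := (parent_edge_data (depth v) v).1.
Definition parent_weight v := (parent_edge_data (depth v) v).2.
Definition vertex_weight v := child_weight v (up_label v) (parent_weight v).

Lemma up_label_root : up_label r = 0.
Proof. by rewrite /up_label depth_root. Qed.

Lemma parent_edge_dataE v : v != r ->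
  up_label v = nth 0 (child_labels (parent v) (up_label (parent v)) (parent_weight (parent v)))
                     (index v (children (parent v)))
  /\ parent_weight v = vertex_weight (parent v).
Proof. by move=> /parentP[_ depth_pv]; rewrite /up_label /parent_weight -depth_pv. Qed.

Hypothesis root_branching : (1 < size (children r))%N.

Lemma admissible v :
  star_admissible (v == r) (up_label v) (parent_weight v) (size (children v)).
Proof.
have [n] := ubnP (depth v); elim: n v => // n IHn v depth_v.
have [-> | v_r] := eqVneq v r; first by rewrite /= root_branching up_label_root eqxx.
have [_ depth_pv] := parentP v_r.
have [size_L _ L_ok _] := star_labels_spec four_uniq four_size (IHn (parent v) ltac:(lia)).
rewrite /star_admissible; have [-> ->] := parent_edge_dataE v_r.
rewrite (eq_sym (vertex_weight _)); apply: L_ok; apply: mem_nth.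
by rewrite size_L index_mem mem_children v_r eqxx.
Qed.

Definition tree_labeling u v : G :=
  if (depth u < depth v)%N then up_label v
  else if (depth v < depth u)%N then up_label u else 0.

Lemma tree_labelingC u v : tree_labeling u v = tree_labeling v u.
Proof. by rewrite /tree_labeling; case: ltngtP. Qed.

Lemma tree_labeling_parent v : v != r -> tree_labeling v (parent v) = up_label v.
Proof.
by move=> /parentP[_ depth_pv]; rewrite /tree_labeling -depth_pv ltnNge leqnSn ltnSn.
Qed.

Lemma weight_tree_labeling x : weight e tree_labeling x = vertex_weight x.
Proof.
rewrite /weight sum_neighbours.
have -> : (if x == r then 0 else tree_labeling x (parent x)) = up_label x.
  by have [-> | x_r] := eqVneq x r; rewrite ?up_label_root ?tree_labeling_parent.
have [size_L sum_L _ _] := star_labels_spec four_uniq four_size (admissible x).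
rewrite /vertex_weight /child_weight -sum_L -(sum_nth_index (children_uniq x) size_L).
congr (_ + _); apply: eq_big_seq => c.
rewrite mem_children tree_labelingC => /andP[c_r /eqP px].
by rewrite -px tree_labeling_parent //; have [-> _] := parent_edge_dataE c_r.
Qed.

Lemma tree_labeling_parent_edge v : v != r ->
  (tree_labeling v (parent v) != 0) && (vertex_weight v != vertex_weight (parent v)).
Proof.
move=> v_r; have adm := admissible v.
have [_ _ _ weight_ok] := star_labels_spec four_uniq four_size adm.
move: adm; rewrite /star_admissible (negbTE v_r) tree_labeling_parent // => /andP[-> _].
by have [_ <-] := parent_edge_dataE v_r; apply: weight_ok.
Qed.

Lemma tree_labeling_spec :
  nonzero_edge_labeling e tree_labeling /\
  (forall u v, e u v -> weight e tree_labeling u != weight e tree_labeling v).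
Proof.
split; first split.
- exact: tree_labelingC.
- move=> u v /edge_parent_or_child[[x_r ->] | [x_r ->]];
    last rewrite tree_labelingC; by case/andP: (tree_labeling_parent_edge x_r).
- move=> u v /edge_parent_or_child[[x_r ->] | [x_r ->]]; rewrite !weight_tree_labeling;
    last rewrite eq_sym; by case/andP: (tree_labeling_parent_edge x_r).
Qed.

End Labeling.
End RootedTree.

Local Open Scope ring_scope.

Theorem theorem5 (V : finType) (e : rel V) (G : zmodType) :
  is_tree e -> (3 <= #|V|)%N ->
  (exists s : seq G, uniq s /\ size s = 4%N) ->
  exists f : V -> V -> G,
    nonzero_edge_labeling e f /\
    (forall u v, e u v -> weight e f u != weight e f v).
Proof.
move=> [[e_sym e_irr] e_conn e_acyclic] card_V [four [four_uniq four_size]].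
have /card_gt0P[r0 _] : (0 < #|V|)%N by apply: leq_trans card_V.
have [v [u1 [u2 [u12 e_vu1 e_vu2]]]] := exists_branch_vertex r0 e_sym e_conn card_V.
eexists; apply: (tree_labeling_spec (r := v) e_sym e_irr e_acyclic four_uniq four_size).
have v_child := root_neighbour_child e_sym e_conn e_irr e_acyclic.
apply: (uniq_leq_size (s1 := [:: u1; u2])); first by rewrite /= inE u12.
by move=> x; rewrite !inE => /orP[] /eqP->; apply: v_child.
Qed.
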